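(* Let $K\ge 1$ be an integer. Every element $P$ of $LD_K$ admits a unique factorisation into linear dendrons with $K$ rhizomes: if $P=F_1\times\cdots\times F_N=G_1\times\cdots\times G_M$ where all $F_i$ and $G_j$ are linear dendrons with $K$ rhizomes, then $N=M$ and the multisets $\{\{F_1,\dots,F_N\}\}$ and $\{\{G_1,\dots,G_M\}\}$ are equal (up to isomorphism).
   Context: A finite dynamical system (FDS) is a function $A:S_A\to S_A$ on a finite set, considered up to isomorphism of functional graphs (arcs $x\to A(x)$). The product $AB$ is the function on $S_A\times S_B$, $(a,b)\mapsto(A(a),B(b))$. A dendron is an FDS with connected functional graph and a fixpoint. A predecessor of a state $s$ is a state $t$ with $A(t)=s$ (the fixpoint is a predecessor of itself). A linear dendron is a dendron in which every state other than the fixpoint has at most one predecessor; it has $K$ rhizomes if its fixpoint has exactly $K$ predecessors other than itself. $LD_K$ is the multiplicative monoid generated (under the product of FDSs) by the linear dendrons with $K$ rhizomes. *)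

From mathcomp Require Import all_boot.
Set Implicit Arguments. Unset Strict Implicit. Unset Printing Implicit Defensive.

Record fds := FDS { st : finType; fn : st -> st }.
Arguments fn : clear implicits.

Definition fds_iso (A B : fds) : Prop :=
  exists h : st A -> st B, bijective h /\ forall x, h (fn A x) = fn B (h x).

Definition fds_prod (A B : fds) : fds :=
  @FDS (st A * st B)%type (fun p => (fn A p.1, fn B p.2)).

Definition fds_one : fds := @FDS unit (fun x => x).

Definition fds_prodl (Fs : seq fds) : fds := foldr fds_prod fds_one Fs.

Definition fds_connected (A : fds) : Prop :=
  forall x y : st A, connect (fun u v => (fn A u == v) || (fn A v == u)) x y.

Definition npred_other (A : fds) (s : st A) : nat :=
  #|[pred t | (fn A t == s) && (t != s)]|.

Definition linear_dendron (K : nat) (A : fds) : Prop :=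
  fds_connected A /\
  exists r : st A, fn A r = r /\
    (forall s : st A, s != r -> #|[pred t | fn A t == s]| <= 1) /\
    @npred_other A r = K.

(* For p > 0 the weight sum  W_p(A) = sum_x indeg(x)^p * prod_(k=1..L) indeg(A^k x)^L  is
   multiplicative and an isomorphism invariant.  In a linear dendron F with K rhizomes only the
   root and the states having a predecessor contribute: the root gives (K+1)^p (K+1)^(L*L), and a
   non-root state at depth t gives B^(L+1-t) with B = (K+1)^L, since its orbit passes through
   states of in-degree 1 until it reaches the root.  So W_p(F) = (K+1)^p (K+1)^(L*L) + c(F) with
   c(F) independent of p, and equality of W_p on both factorisations for every p makes the
   polynomials prod (X + c(F_i)) and prod (X + c(G_j)) agree at infinitely many points: the codes
   coincide as multisets.  Once |F| < B, the base-B digits of c(F) count the states with a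
   predecessor at each depth, which fixes the number of states at each depth; two linear
   dendrons with the same depth profile are isomorphic, via an injective morphism built layer by
   layer from the deepest states to the root. *)

From mathcomp Require Import all_boot zify.
From mathcomp Require Import all_algebra.
Set Implicit Arguments. Unset Strict Implicit. Unset Printing Implicit Defensive.

Section ProdShift.
Import GRing.Theory Num.Theory.
Local Open Scope ring_scope.

Lemma perm_eq_of_prod_shift (z : nat -> nat) (s t : seq nat) :
  injective z ->
  (forall p, \prod_(x <- s) (z p + x) = \prod_(x <- t) (z p + x))%N ->
  perm_eq s t.
Proof.
move=> z_inj eq_z.
pose P u : {poly rat} := \prod_(c <- [seq - x%:R | x <- u]) ('X - c%:P).
have P_eval u p : (P u).[(z p)%:R] = (\prod_(x <- u) (z p + x))%N%:R.
  rewrite horner_prod big_map natr_prod; apply: eq_bigr => x _.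
  by rewrite hornerXsubC opprK natrD.
have /prod_XsubC_eq/perm_map_inj : P s = P t; last first.
  by apply => x y /eqP; rewrite eqr_opp eqr_nat => /eqP.
apply/eqP; rewrite -subr_eq0; apply/eqP.
apply: (@roots_geq_poly_eq0 _ _ [seq (z p)%:R | p <- iota 0 (size (P s - P t))]).
- by apply/allP => _ /mapP [p _ ->]; rewrite /root hornerD hornerN !P_eval eq_z subrr.
- by rewrite map_inj_uniq ?iota_uniq // => p q /eqP; rewrite eqr_nat => /eqP /z_inj.
- by rewrite size_map size_iota.
Qed.

End ProdShift.

Lemma eq_digits (B n : nat) (a b : nat -> nat) :
  (forall j, a j < B) -> (forall j, b j < B) ->
  \sum_(j < n) a j * B ^ j = \sum_(j < n) b j * B ^ j -> forall j, j < n -> a j = b j.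
Proof.
elim: n a b => [//|n IHn] a b aB bB.
have shift (c : nat -> nat) : \sum_(j < n.+1) c j * B ^ j = c 0 + B * \sum_(j < n) c j.+1 * B ^ j.
  rewrite big_ord_recl muln1 big_distrr; congr (_ + _).
  by apply: eq_bigr => j _; rewrite expnS mulnCA.
rewrite !shift => eq_ab.
have B_gt0 : 0 < B by apply: leq_ltn_trans (aB 0).
have eq0 : a 0 = b 0.
  have /= := congr1 (modn^~ B) eq_ab.
  by rewrite ![B * _]mulnC ![_ 0 + _]addnC !modnMDl !modn_small.
move: eq_ab; rewrite eq0 => /addnI /eqP; rewrite eqn_pmul2l // => /eqP eq_tail.
by case=> [//|j]; apply: (IHn (fun j => a j.+1) (fun j => b j.+1)).
Qed.

Lemma sum_expn_partition (T : finType) (P : pred T) (e : T -> nat) (B n : nat) :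
  (forall x, e x < n) ->
  \sum_(x | P x) B ^ e x = \sum_(j < n) #|[pred x | P x && (e x == j)]| * B ^ j.
Proof.
move=> e_lt; rewrite (partition_big (fun x => Ordinal (e_lt x)) xpredT) //=.
apply: eq_bigr => j _; rewrite (eq_bigr (fun _ => B ^ j)); last by move=> x /andP [_ /eqP <-].
by rewrite sum_nat_const.
Qed.

Lemma injection_of_leq_card (T1 T2 : finType) (A : {pred T1}) (B : {pred T2}) (y0 : T2) :
  #|A| <= #|B| -> exists f : T1 -> T2, {in A &, injective f} /\ {in A, forall x, f x \in B}.
Proof.
move=> le_AB.
have idx_lt x : x \in A -> index x (enum A) < size (enum B).
  by move=> xA; rewrite -cardE (leq_trans _ le_AB) // cardE index_mem mem_enum.
exists (fun x => nth y0 (enum B) (index x (enum A))); split; last first.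
  by move=> x xA; rewrite -mem_enum mem_nth ?idx_lt.
move=> x y xA yA /eqP; rewrite nth_uniq ?idx_lt ?enum_uniq // => /eqP eq_idx.
by rewrite -(nth_index x (_ : x \in enum A)) ?eq_idx ?nth_index ?mem_enum.
Qed.

Lemma seq_bounded (T : Type) (f : T -> nat) (x0 : T) (s : seq T) :
  exists L, forall i, i < size s -> f (nth x0 s i) <= L.
Proof.
exists (\sum_(x <- s) f x); elim: s => [//|x s IHs] [|i] /= lt_i; rewrite big_cons.
  exact: leq_addr.
exact: leq_trans (IHs i lt_i) (leq_addl _ _).
Qed.

Lemma perm_map_nth (T : Type) (U : eqType) (f : T -> U) (x0 : T) (s t : seq T) :
  perm_eq (map f s) (map f t) ->
  size s = size t /\ exists I : seq nat, perm_eq I (iota 0 (size s)) /\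
    forall i, i < size s -> nth 0 I i < size t /\ f (nth x0 s i) = f (nth x0 t (nth 0 I i)).
Proof.
move=> fst; have size_st : size s = size t by rewrite -(size_map f) (perm_size fst) size_map.
split => //; have [I I_perm fs_eq] := perm_iotaP (f x0) fst.
rewrite size_map -size_st in I_perm; exists I; split => // i lt_i.
have size_I : size I = size s by rewrite (perm_size I_perm) size_iota.
have lt_Ii : nth 0 I i < size t.
  have : nth 0 I i \in iota 0 (size s) by rewrite -(perm_mem I_perm) mem_nth ?size_I.
  by rewrite mem_iota size_st.
split => //; have := congr1 (nth (f x0) ^~ i) fs_eq.
by rewrite /= (nth_map 0) ?size_I // !(nth_map x0).
Qed.

Lemma sum_leq_succ (m n : nat) : \sum_(k < n) (m <= k.+1) = n - m.-1.
Proof. by elim: n => [|n IHn]; rewrite ?big_ord0 // big_ord_recr /= IHn; lia. Qed.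

Definition indeg (A : fds) (x : st A) : nat := #|[pred t | fn A t == x]|.

Definition has_pred (A : fds) (x : st A) : bool := [exists t, fn A t == x].

Definition weight (A : fds) (p L : nat) (x : st A) : nat :=
  indeg x ^ p * \prod_(k < L) indeg (iter k.+1 (fn A) x) ^ L.

Definition weight_sum (A : fds) (p L : nat) : nat := \sum_(x : st A) weight p L x.

Lemma has_pred_indeg (A : fds) (x : st A) : has_pred x = (0 < indeg x).
Proof. by apply/existsP/card_gt0P => -[t]; exists t. Qed.

Lemma has_pred_fn (A : fds) (x : st A) : has_pred (fn A x).
Proof. by apply/existsP; exists x. Qed.

Definition some_pred (A : fds) (x : st A) : st A := odflt x [pick t | fn A t == x].

Lemma some_predK (A : fds) (x : st A) : has_pred x -> fn A (some_pred x) = x.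
Proof.
case/existsP=> t fn_t; rewrite /some_pred.
by case: pickP => [? /eqP | /(_ t)/negbT/negP].
Qed.

Lemma iter_prod (A B : fds) k (x : st (fds_prod A B)) :
  iter k (fn (fds_prod A B)) x = (iter k (fn A) x.1, iter k (fn B) x.2).
Proof. by elim: k => [|k IHk]; [case: x | rewrite !iterS IHk]. Qed.

Lemma indeg_prod (A B : fds) (x : st (fds_prod A B)) : indeg x = indeg x.1 * indeg x.2.
Proof.
rewrite /indeg -cardX; apply: eq_card => -[u v].
by case: x => a b; rewrite !inE /= xpair_eqE.
Qed.

Lemma weight_prod (A B : fds) p L (x : st (fds_prod A B)) :
  weight p L x = weight p L x.1 * weight p L x.2.
Proof.
rewrite /weight indeg_prod expnMn mulnACA -big_split /=; congr (_ * _).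
by apply: eq_bigr => k _; rewrite indeg_prod iter_prod expnMn.
Qed.

Lemma weight_sum_prod (A B : fds) p L :
  weight_sum (fds_prod A B) p L = weight_sum A p L * weight_sum B p L.
Proof.
rewrite /weight_sum big_distrlr pair_big /=.
by apply: eq_bigr => -[a b] _; rewrite weight_prod.
Qed.

Lemma weight_sum_one p L : weight_sum fds_one p L = 1.
Proof.
have indeg1 (x : st fds_one) : indeg x = 1.
  by rewrite /indeg -card_unit; apply: eq_card => -[]; case: x.
rewrite /weight_sum /= (big_pred1 (tt : st fds_one)) => [|[]] //.
by rewrite /weight big1 => [|k _]; rewrite indeg1 exp1n.
Qed.

Lemma weight_sum_prodl (Fs : seq fds) p L :
  weight_sum (fds_prodl Fs) p L = \prod_(F <- Fs) weight_sum F p L.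
Proof.
elim: Fs => [|F Fs IHFs]; first by rewrite big_nil weight_sum_one.
by rewrite big_cons /= weight_sum_prod IHFs.
Qed.

Lemma weight_sum_iso (A B : fds) p L : fds_iso A B -> weight_sum A p L = weight_sum B p L.
Proof.
case=> h [h_bij h_comm]; have h_inj := bij_inj h_bij.
have h_iter k x : h (iter k (fn A) x) = iter k (fn B) (h x).
  by elim: k => [|k IHk] //=; rewrite h_comm IHk.
have indeg_h x : indeg (h x) = indeg x.
  case: h_bij => g hK gK; rewrite /indeg -(card_image h_inj); apply: eq_card => y.
  rewrite inE; apply/eqP/imageP => [fy | [t /[!inE] /eqP <- ->]]; last by rewrite h_comm.
  by exists (g y); rewrite ?gK // inE; apply/eqP/h_inj; rewrite h_comm gK fy.
rewrite /weight_sum (reindex h) /=; last exact: onW_bij.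
apply: eq_bigr => x _; rewrite /weight indeg_h; congr (_ * _).
by apply: eq_bigr => k _; rewrite -h_iter indeg_h.
Qed.

Lemma connected_reaches_fixpoint (A : fds) (r : st A) :
  fds_connected A -> fn A r = r -> forall x, exists k, iter k (fn A) x = r.
Proof.
move=> conn fr x; have /connectP [p] := conn r x.
elim/last_ind: p x => [|p y IHp] x; first by move=> _ ->; exists 0.
rewrite rcons_path last_rcons => /andP [/IHp/(_ erefl) [k zk] /orP [/eqP zy | /eqP yz]] ->.
  by exists k; rewrite -zy -iterSr iterS zk.
by exists k.+1; rewrite iterSr yz.
Qed.

Record dendron_depth (K : nat) (F : fds) (r : st F) (d : st F -> nat) : Prop := {
  iter_root_eq : forall x k, (iter k (fn F) x == r) = (d x <= k);
  indeg_le1 : forall x, x != r -> indeg x <= 1;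
  indeg_root : indeg r = K.+1 }.

Lemma linear_dendron_depth K F :
  linear_dendron K F -> exists (r : st F) d, dendron_depth K r d.
Proof.
case=> conn [r [fr [pred_le1 npred_r]]].
have reach := connected_reaches_fixpoint conn fr.
have reach_eq x : exists k, iter k (fn F) x == r by have [k /eqP] := reach x; exists k.
exists r, (fun x => ex_minn (reach_eq x)); split => [x k | // | ].
- case: ex_minnP => m /eqP iter_m min_m; apply/idP/idP; first exact: min_m.
  by move/subnK <-; rewrite iterD iter_m iter_fix.
- rewrite /indeg (cardD1 r) inE fr eqxx -npred_r; congr _.+1.
  by apply: eq_card => t; rewrite !inE andbC.
Qed.

Definition dendron_code (K L : nat) (A : fds) : nat := weight_sum A 1 L - K.+1 * K.+1 ^ (L * L).

Section Dendron.
Variables (K : nat) (F : fds) (r : st F) (d : st F -> nat).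
Hypothesis Hd : dendron_depth K r d.

Lemma depth_eq0 x : (d x == 0) = (x == r).
Proof. by rewrite -leqn0 -(iter_root_eq Hd). Qed.

Lemma depth_root : d r = 0.
Proof. by apply/eqP; rewrite depth_eq0. Qed.

Lemma fn_root : fn F r = r.
Proof. by apply/eqP; rewrite -[fn F r]/(iter 1 (fn F) r) (iter_root_eq Hd) depth_root. Qed.

Lemma iter_root k : iter k (fn F) r = r.
Proof. exact: iter_fix fn_root. Qed.

Lemma depth_fn x : d (fn F x) = (d x).-1.
Proof.
have le_k k : (d (fn F x) <= k) = (d x <= k.+1) by rewrite -!(iter_root_eq Hd) iterSr.
by have := le_k (d (fn F x)); have := le_k (d (fn F x)).-1; rewrite leqnn; lia.
Qed.

Lemma depth_iter x k : d (iter k (fn F) x) = d x - k.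
Proof. by elim: k => [|k IHk]; rewrite ?subn0 // iterS depth_fn IHk subnS. Qed.

Lemma depth_lt_card x : d x < #|st F|.
Proof.
have iter_inj : injective (fun k : 'I_(d x).+1 => iter k (fn F) x).
  move=> i j /(congr1 d); rewrite !depth_iter => eq_ij; apply/ord_inj.
  by move: (ltn_ord i) (ltn_ord j) eq_ij; rewrite !ltnS; lia.
by have := leq_card _ iter_inj; rewrite card_ord.
Qed.

Lemma fn_inj u v : fn F u = fn F v -> fn F u != r -> u = v.
Proof.
move=> eq_uv /(indeg_le1 Hd) /card_le1_eqP; apply; rewrite inE ?eq_uv //.
Qed.

Lemma some_pred_fn x : fn F x != r -> some_pred (fn F x) = x.
Proof. by move=> fx_r; apply: fn_inj; rewrite ?some_predK ?has_pred_fn. Qed.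

Lemma layer0 : #|[pred x | d x == 0]| = 1.
Proof. by rewrite -(card1 r); apply: eq_card => x; rewrite !inE depth_eq0. Qed.

Lemma layer1 : #|[pred x | d x == 1]| = K.
Proof.
apply/succn_inj; rewrite -(indeg_root Hd) /indeg (cardD1 r [pred t | fn F t == r]).
rewrite inE fn_root eqxx add1n; congr _.+1.
apply: eq_card => x; rewrite !inE -depth_eq0 -lt0n.
by rewrite -[fn F x]/(iter 1 (fn F) x) (iter_root_eq Hd) eqn_leq andbC.
Qed.

Lemma layer_succ t : 0 < t -> #|[pred x | d x == t.+1]| = #|[pred x | (d x == t) && has_pred x]|.
Proof.
move=> t_gt0.
have fn_inj_layer : {in [pred x | d x == t.+1] &, injective (fn F)}.
  move=> u v /[!inE] /eqP du _ eq_uv; apply: fn_inj eq_uv _.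
  by rewrite -depth_eq0 depth_fn du -lt0n.
rewrite -(card_in_imset fn_inj_layer); apply: eq_card => x; rewrite [in RHS]inE.
apply/imsetP/andP => [[u /[!inE] /eqP du ->] | [/eqP dx /existsP [u /eqP fu]]].
  by rewrite depth_fn du has_pred_fn.
by exists u; rewrite // inE; move: dx; rewrite -fu depth_fn; lia.
Qed.

Lemma leaf_layer t : 0 < t ->
  #|[pred x | (d x == t) && ~~ has_pred x]| = #|[pred x | d x == t]| - #|[pred x | d x == t.+1]|.
Proof.
move=> t_gt0; rewrite layer_succ // -(cardID (@has_pred F) [pred x | d x == t]) addKn.
by apply: eq_card => x; rewrite !inE andbC.
Qed.

Lemma depth_some_pred x : has_pred x -> 0 < d x -> d (some_pred x) = (d x).+1.
Proof. by move=> px; have := depth_fn (some_pred x); rewrite some_predK //; lia. Qed.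

Lemma indeg_internal x : x != r -> has_pred x -> indeg x = 1.
Proof. by move=> xr; rewrite has_pred_indeg => ?; apply/eqP; rewrite eqn_leq (indeg_le1 Hd). Qed.

Lemma weight_root p L : weight p L r = K.+1 ^ p * K.+1 ^ (L * L).
Proof.
rewrite /weight (indeg_root Hd); congr (_ * _).
under eq_bigr do rewrite iter_root (indeg_root Hd).
by rewrite prod_nat_const card_ord -expnM.
Qed.

Lemma weight_internal p L x :
  x != r -> has_pred x -> weight p L x = (K.+1 ^ L) ^ (L - (d x).-1).
Proof.
move=> xr px; rewrite /weight indeg_internal // exp1n mul1n -sum_leq_succ expn_sum.
apply: eq_bigr => k _; rewrite -(iter_root_eq Hd).
have [->|ne] := eqVneq (iter k.+1 (fn F) x) r; first by rewrite (indeg_root Hd).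
by rewrite indeg_internal ?exp1n // iterS has_pred_fn.
Qed.

Lemma weight_leaf p L (x : st F) : 0 < p -> ~~ has_pred x -> weight p L x = 0.
Proof. by move=> p_gt0; rewrite /weight has_pred_indeg -eqn0Ngt => /eqP ->; rewrite exp0n. Qed.

Lemma weight_sum_dendron p L : 0 < p ->
  weight_sum F p L = K.+1 ^ p * K.+1 ^ (L * L)
                     + \sum_(x | (x != r) && has_pred x) (K.+1 ^ L) ^ (L - (d x).-1).
Proof.
move=> p_gt0; rewrite /weight_sum (bigD1 r) //= weight_root; congr (_ + _).
rewrite (bigID (@has_pred F)) /= [X in _ + X]big1 ?addn0 => [|x /andP [_ /weight_leaf ->]] //.
by apply: eq_bigr => x /andP [xr px]; rewrite weight_internal.
Qed.

Definition code_digit L j := #|[pred x | (x != r) && has_pred x && (L - (d x).-1 == j)]|.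

Lemma dendron_code_digits L :
  dendron_code K L F = \sum_(j < L.+1) code_digit L j * (K.+1 ^ L) ^ j.
Proof.
rewrite /dendron_code weight_sum_dendron // expn1 addKn.
by apply: sum_expn_partition => x; apply: leq_subr.
Qed.

Lemma internal_layer_digit L t :
  0 < t <= L -> #|[pred x | (d x == t) && has_pred x]| = code_digit L (L - t.-1).
Proof.
case/andP => t_gt0 t_le; apply: eq_card => x; rewrite !inE -depth_eq0 [_ && has_pred x]andbC.
by case: (has_pred x) => //=; apply/idP/andP; lia.
Qed.

End Dendron.

Section Isomorphism.
Variables (K : nat) (F G : fds) (rF : st F) (rG : st G).
Variables (dF : st F -> nat) (dG : st G -> nat).
Hypotheses (HF : dendron_depth K rF dF) (HG : dendron_depth K rG dG).
Hypothesis same_layers : forall t, #|[pred x | dF x == t]| = #|[pred y | dG y == t]|.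

Lemma same_leaf_layers t : 0 < t ->
  #|[pred x | (dF x == t) && ~~ has_pred x]| = #|[pred y | (dG y == t) && ~~ has_pred y]|.
Proof.
by move=> t_gt0; rewrite (leaf_layer HF) // (leaf_layer HG) // !same_layers.
Qed.

Definition partial_morphism t (h : st F -> st G) :=
  [/\ forall x, t <= dF x -> dG (h x) = dF x,
      {in [pred x | t <= dF x] &, injective h} &
      forall x, t < dF x -> h (fn F x) = fn G (h x)].

Lemma partial_morphism_top t : #|st F| <= t -> partial_morphism t (fun=> rG).
Proof.
by move=> le_t; split=> [x | x y /[!inE] | x] t_le; have := depth_lt_card HF x; lia.
Qed.

Section Extension.
Variables (t : nat) (h s : st F -> st G).
Hypothesis t_gt0 : 0 < t.
Hypothesis h_morph : partial_morphism t.+1 h.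
Let leaves_F := [pred x | (dF x == t) && ~~ has_pred x].
Hypothesis s_inj : {in leaves_F &, injective s}.
Hypothesis s_leaves : {in leaves_F, forall x, (dG (s x) == t) && ~~ has_pred (s x)}.

Definition extension x :=
  if t < dF x then h x else if has_pred x then fn G (h (some_pred x)) else s x.

Lemma extension_layer x :
  dF x = t -> dG (extension x) = t /\ has_pred (extension x) = has_pred x.
Proof.
case: h_morph => h_depth _ _ dx; rewrite /extension dx ltnn; case: ifPn => px.
  by rewrite has_pred_fn (depth_fn HG) h_depth (depth_some_pred HF) ?dx.
have /andP [/eqP -> /negbTE ->] // : (dG (s x) == t) && ~~ has_pred (s x).
by apply: s_leaves; rewrite inE dx eqxx.
Qed.

Lemma extension_morph : partial_morphism t extension.
Proof.
case: h_morph => h_depth h_inj h_comm.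
have ext_depth x : t <= dF x -> dG (extension x) = dF x.
  rewrite leq_eqVlt => /orP [/eqP dx | lt_x]; first by rewrite -dx (extension_layer (esym dx)).1.
  by rewrite /extension lt_x h_depth.
split=> // [x y /[!inE] le_x le_y eq_xy | x lt_x].
- have eq_d : dF x = dF y by rewrite -ext_depth // eq_xy ext_depth.
  have [lt_x | ge_x] := ltnP t (dF x).
    by move: eq_xy; rewrite /extension -eq_d lt_x; apply: h_inj; rewrite inE -?eq_d.
  have dx : dF x = t by lia.
  have dy : dF y = t by lia.
  have eq_p : has_pred x = has_pred y.
    by rewrite -(extension_layer dx).2 eq_xy (extension_layer dy).2.
  move: eq_xy; rewrite /extension dx dy ltnn -eq_p; case: ifPn => px eq_xy.
    have py : has_pred y by rewrite -eq_p.
    have dpx : dF (some_pred x) = t.+1 by rewrite (depth_some_pred HF) ?dx.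
    have dpy : dF (some_pred y) = t.+1 by rewrite (depth_some_pred HF) ?dy.
    rewrite -(some_predK px) -(some_predK py); congr (fn F _).
    apply: h_inj; rewrite ?inE ?dpx ?dpy //; apply: (fn_inj HG eq_xy).
    by rewrite -(depth_eq0 HG) (depth_fn HG) h_depth dpx // -lt0n.
  by apply: s_inj eq_xy; rewrite inE ?dx ?dy eqxx -?eq_p.
- rewrite /extension lt_x (depth_fn HF); case: ltnP => [lt_fx | ge_fx]; first by apply: h_comm; lia.
  by rewrite has_pred_fn (some_pred_fn HF) // -(depth_eq0 HF) (depth_fn HF); lia.
Qed.

End Extension.

Lemma partial_morphism_step t h :
  0 < t -> partial_morphism t.+1 h -> exists h', partial_morphism t h'.
Proof.
move=> t_gt0 h_morph.
have [s [s_inj s_leaves]] := injection_of_leq_card rG (eq_leq (same_leaf_layers t_gt0)).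
by exists (extension t h s); apply: extension_morph.
Qed.

Lemma partial_morphism_one : exists h, partial_morphism 1 h.
Proof.
suff: forall n t, 0 < t -> #|st F| <= t + n -> exists h, partial_morphism t h by apply.
elim=> [|n IHn] t t_gt0 le_t.
  by exists (fun=> rG); apply: partial_morphism_top; rewrite -(addn0 t).
have [|h /(partial_morphism_step t_gt0) //] := IHn t.+1 isT.
by rewrite addSnnS.
Qed.

Lemma morphism_inj : exists h : st F -> st G, injective h /\ forall x, h (fn F x) = fn G (h x).
Proof.
have [h [h_depth h_inj h_comm]] := partial_morphism_one.
pose h' x := if dF x == 0 then rG else h x.
have h'_depth x : dG (h' x) = dF x.
  by rewrite /h'; case: posnP => [-> | /h_depth //]; rewrite (depth_root HG).
exists h'; split => [x y eq_xy | x].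
  have eq_d : dF x = dF y by rewrite -!h'_depth eq_xy.
  have [dx0 | dx_pos] := posnP (dF x).
    have /eqP -> : x == rF by rewrite -(depth_eq0 HF) dx0.
    by apply/esym/eqP; rewrite -(depth_eq0 HF) -eq_d dx0.
  by move: eq_xy; rewrite /h' -eq_d eqn0Ngt dx_pos; apply: h_inj; rewrite inE -?eq_d.
rewrite /h' (depth_fn HF); case dx: (dF x) => [|[|n]] /=.
- by rewrite (fn_root HG).
- by apply/eqP; rewrite eq_sym -(depth_eq0 HG) (depth_fn HG) h_depth dx.
- by rewrite h_comm ?dx.
Qed.

End Isomorphism.

Lemma iso_of_same_layers K (F G : fds) (rF : st F) (rG : st G) dF dG :
  dendron_depth K rF dF -> dendron_depth K rG dG ->
  (forall t, #|[pred x | dF x == t]| = #|[pred y | dG y == t]|) -> fds_iso F G.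
Proof.
move=> HF HG same_layers.
have [h [h_inj h_comm]] := morphism_inj HF HG same_layers.
have [g [g_inj _]] := morphism_inj HG HF (fun t => esym (same_layers t)).
by exists h; split => //; apply: inj_card_bij => //; apply: leq_card g_inj.
Qed.

Lemma weight_sum_linear_dendron K L p F : 0 < p -> linear_dendron K F ->
  weight_sum F p L = K.+1 ^ p * K.+1 ^ (L * L) + dendron_code K L F.
Proof.
move=> p_gt0 /linear_dendron_depth [r [d Hd]].
by rewrite /dendron_code !(weight_sum_dendron Hd) // expn1 addKn.
Qed.

Lemma weight_sum_prodl_linear K L p (Fs : seq fds) : 0 < p ->
  (forall i, i < size Fs -> linear_dendron K (nth fds_one Fs i)) ->
  weight_sum (fds_prodl Fs) p L
  = \prod_(c <- map (dendron_code K L) Fs) (K.+1 ^ p * K.+1 ^ (L * L) + c).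
Proof.
move=> p_gt0; rewrite weight_sum_prodl big_map.
elim: Fs => [|F Fs IHFs] ld_Fs; rewrite ?big_nil // !big_cons.
by rewrite (weight_sum_linear_dendron _ p_gt0 (ld_Fs 0 isT)) IHFs // => i; apply: (ld_Fs i.+1).
Qed.

Lemma linear_dendron_code_iso K L (F G : fds) : 0 < K ->
  linear_dendron K F -> linear_dendron K G -> #|st F| <= L -> #|st G| <= L ->
  dendron_code K L F = dendron_code K L G -> fds_iso F G.
Proof.
move=> K_gt0 /linear_dendron_depth [rF [dF HF]] /linear_dendron_depth [rG [dG HG]] F_le G_le.
have digit_lt (A : fds) (r : st A) d j : #|st A| <= L -> code_digit r d L j < K.+1 ^ L.
  by move=> A_le; rewrite (leq_ltn_trans (max_card _)) // (leq_ltn_trans A_le) // ltn_expl.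
rewrite (dendron_code_digits HF) (dendron_code_digits HG).
move/(eq_digits (digit_lt _ rF dF ^~ F_le) (digit_lt _ rG dG ^~ G_le)) => eq_digit.
have same_internal t : 0 < t ->
    #|[pred x | (dF x == t) && has_pred x]| = #|[pred y | (dG y == t) && has_pred y]|.
  move=> t_gt0; have [t_le | lt_t] := leqP t L.
    rewrite (internal_layer_digit HF (L := L)) ?t_gt0 //.
    by rewrite (internal_layer_digit HG (L := L)) ?t_gt0 // eq_digit //; lia.
  rewrite !eq_card0 // => x; rewrite !inE; apply/andP => -[/eqP dx _].
    by have := depth_lt_card HG x; lia.
  by have := depth_lt_card HF x; lia.
apply: (iso_of_same_layers HF HG) => -[|[|t]].
- by rewrite (layer0 HF) (layer0 HG).
- by rewrite (layer1 HF) (layer1 HG).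
- by rewrite (layer_succ HF) // (layer_succ HG) // same_internal.
Qed.

Theorem mainTheorem5 (K : nat) (HK : 1 <= K) (Fs Gs : seq fds) :
  (forall i, i < size Fs -> linear_dendron K (nth fds_one Fs i)) ->
  (forall j, j < size Gs -> linear_dendron K (nth fds_one Gs j)) ->
  fds_iso (fds_prodl Fs) (fds_prodl Gs) ->
  size Fs = size Gs /\
  exists s : seq nat, perm_eq s (iota 0 (size Fs)) /\
    forall i, i < size Fs -> fds_iso (nth fds_one Fs i) (nth fds_one Gs (nth 0 s i)).
Proof.
move=> ld_Fs ld_Gs iso_FG.
have [LF LF_ge] := seq_bounded (fun A => #|st A|) fds_one Fs.
have [LG LG_ge] := seq_bounded (fun A => #|st A|) fds_one Gs.
pose L := maxn LF LG.
have codes : perm_eq (map (dendron_code K L) Fs) (map (dendron_code K L) Gs).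
  apply: (@perm_eq_of_prod_shift (fun p => K.+1 ^ p.+1 * K.+1 ^ (L * L))) => [p q | p].
    by move/eqP; rewrite eqn_pmul2r ?expn_gt0 // eqn_exp2l // => /eqP [].
  by rewrite -!weight_sum_prodl_linear //; apply: weight_sum_iso.
have [size_eq [s [s_perm code_s]]] := perm_map_nth fds_one codes.
split => //; exists s; split => // i lt_i; have [lt_si eq_code] := code_s i lt_i.
apply: (linear_dendron_code_iso HK (ld_Fs i lt_i) (ld_Gs _ lt_si) _ _ eq_code).
  exact: leq_trans (LF_ge i lt_i) (leq_maxl _ _).
exact: leq_trans (LG_ge _ lt_si) (leq_maxr _ _).
Qed.
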